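(* Let $k\geq 2$, $m\geq 3$, and $n\in\mathbb{N}$. There is no $[n,k]_2$ classical code $C$ with encoding function $\mathrm{Enc}:\mathbb{F}_{2^k}\to\mathbb{F}_2^n$ such that the collection $(C^{(h)};\mathrm{Enc}^{(h)})_{h\in[m]}$ with $(C^{(h)};\mathrm{Enc}^{(h)})=(C;\mathrm{Enc})$ for every $h\in[m]$ is $m$-multiplication-friendly.
   Context: $x*y$ is the componentwise product. An encoding function of an $[n,k]_q$ classical (linear) code $C\subseteq\mathbb{F}_q^n$ is an $\mathbb{F}_q$-linear isomorphism $\mathrm{Enc}:\mathbb{F}_{q^k}\to C$. A collection $(C^{(h)};\mathrm{Enc}^{(h)})_{h\in[m]}$ of $[n,k]_q$ codes is $m$-multiplication-friendly if there is an $\mathbb{F}_q$-linear $\mathrm{Dec}:\mathbb{F}_q^n\to\mathbb{F}_{q^k}$ with $z_1\cdots z_m=\mathrm{Dec}(\mathrm{Enc}^{(1)}(z_1)*\cdots*\mathrm{Enc}^{(m)}(z_m))$ for all $z_1,\dots,z_m\in\mathbb{F}_{q^k}$. *)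

From HB Require Import structures.
From mathcomp Require Import all_boot all_order all_algebra all_field.
Set Implicit Arguments. Unset Strict Implicit. Unset Printing Implicit Defensive.
Import GRing.Theory.
Local Open Scope ring_scope.

Notation F2 := ('F_2 : finFieldType).

(* Scalar action of F_2 on a field L of characteristic 2 (the F_2-vector-space
   structure of F_{2^k}): a . x := (a as 0/1)%:R * x. *)
Definition F2scale (L : fieldType) (a : F2) (x : L) : L := (nat_of_ord a)%:R * x.

Definition F2linear_enc (L : fieldType) (n : nat) (f : L -> 'rV[F2]_n) : Prop :=
  forall (a : F2) (x y : L), f (F2scale a x + y) = a *: f x + f y.
Definition F2linear_dec (L : fieldType) (n : nat) (f : 'rV[F2]_n -> L) : Prop :=
  forall (a : F2) (v w : 'rV[F2]_n), f (a *: v + w) = F2scale a (f v) + f w.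

Definition cwprod (n m : nat) (x : 'I_m -> 'rV[F2]_n) : 'rV[F2]_n :=
  \row_(i < n) \prod_(h < m) x h 0 i.

(* (C;Enc) is an [n,k]_2 code with encoding Enc : L ~= C = image Enc
   (an injective F_2-linear map), and the m-fold collection of copies of it
   is m-multiplication-friendly. *)
Definition mult_friendly_self (L : fieldType) (n m : nat)
  (Enc : L -> 'rV[F2]_n) : Prop :=
  exists Dec : 'rV[F2]_n -> L, F2linear_dec Dec /\
    forall z : 'I_m -> L,
      \prod_(h < m) z h = Dec (cwprod (fun h => Enc (z h))).

From mathcomp Require Import all_boot all_order all_algebra all_field.
Import GRing.Theory.
Local Open Scope ring_scope.

(* Every element of F_2 is idempotent, so a componentwise product over F_2
   only sees which codewords occur, not how often.  Feeding (x, x, 1, ..., 1)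
   and (x, 1, 1, ..., 1) to a multiplication-friendly decoder (m >= 3 leaves a
   slot for 1 in both) therefore gives x * x = x for every x in F_{2^k}, so
   F_{2^k} = {0, 1}, which is impossible for k >= 2. *)

Lemma F2_mulrr (a : F2) : a * a = a.
Proof. by case: a => [[|[|]]] //= ?; apply/val_inj. Qed.

Lemma F2_exprS (a : F2) (j : nat) : a ^+ j.+1 = a.
Proof.
elim: j => [|j IHj]; first exact: expr1.
by rewrite exprS IHj F2_mulrr.
Qed.

Lemma prodr_if_ltn {R : comPzSemiRingType} {m j : nat} (a b : R) :
  (j <= m)%N ->
  \prod_(h < m) (if (h < j)%N then a else b) = a ^+ j * b ^+ (m - j).
Proof.
move=> le_jm; rewrite -(big_mkord xpredT (fun h => if (h < j)%N then a else b)).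
rewrite (big_cat_nat (leq0n j) le_jm) /=.
rewrite (@eq_big_nat _ _ _ 0 j _ (fun=> a)) => [|h /andP[_ ->] //].
rewrite (@eq_big_nat _ _ _ j m _ (fun=> b)) => [|h /andP[le_jh _]]; last first.
  by rewrite ltnNge le_jh.
by rewrite !prodr_const_nat subn0.
Qed.

Lemma cwprod_if_ltn {n m j : nat} (u v : 'rV[F2]_n) : (0 < j < m)%N ->
  cwprod (fun h : 'I_m => if (h < j)%N then u else v) = \row_i (u 0 i * v 0 i).
Proof.
case/andP=> j_gt0 lt_jm; apply/rowP => i; rewrite !mxE.
under eq_bigr => h _ do rewrite (fun_if (fun w : 'rV_n => w 0 i)).
rewrite prodr_if_ltn; last exact: ltnW.
rewrite -(prednK j_gt0) -(prednK (_ : 0 < m - j.-1.+1)%N); last first.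
  by rewrite prednK ?subn_gt0.
by rewrite !F2_exprS.
Qed.

Lemma mult_friendly_self_idem {L : fieldType} {n m : nat} {Enc : L -> 'rV[F2]_n} :
  (2 < m)%N -> mult_friendly_self m Enc -> forall x : L, x * x = x.
Proof.
move=> gt2m [Dec [_ prodE]] x.
have powE j : (0 < j < m)%N -> x ^+ j = Dec (\row_i (Enc x 0 i * Enc 1 0 i)).
  move=> j_range; have /andP[_ /ltnW le_jm] := j_range.
  have := prodr_if_ltn x 1 le_jm; rewrite expr1n mulr1 => <-.
  rewrite prodE -(cwprod_if_ltn (Enc x) (Enc 1) j_range); congr Dec.
  by apply/rowP => i; rewrite !mxE; apply: eq_bigr => h _; case: ifP.
by rewrite -expr2 (powE 2%N gt2m) -(powE 1%N) ?(ltn_trans _ gt2m).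
Qed.

Lemma card_le2_idempotent {L : finFieldType} : (forall x : L, x * x = x) -> (#|L| <= 2)%N.
Proof.
move=> idemL; have sub01 : [set: L] \subset [set 0; 1].
  apply/subsetP => x _; rewrite !inE.
  suff : x * (x - 1) == 0 by rewrite mulf_eq0 subr_eq0.
  by rewrite mulrBr mulr1 idemL subrr.
by rewrite -cardsT (leq_trans (subset_leq_card sub01)) // cards2; case: (_ != _).
Qed.

Theorem mainTheorem9 (k m n : nat) (hk : (2 <= k)%N) (hm : (3 <= m)%N)
  (L : finFieldType) (hL : #|L| = (2 ^ k)%N) :
  ~ exists Enc : L -> 'rV[F2]_n,
      [/\ F2linear_enc Enc, injective Enc & mult_friendly_self m Enc].
Proof.
case=> Enc [_ _ friendly].
have := card_le2_idempotent (mult_friendly_self_idem hm friendly).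
by rewrite hL leqNgt (@leq_trans (2 ^ 2)) // leq_exp2l.
Qed.
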